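(* Let $n\ge 538$ be an integer and $\lambda$ a positive integer. Then there is no graphical $2$-$\left(\binom{n}{2},5,\lambda\right)$ design.
   Context: For a finite set $X$ and integer $t\ge 0$, $\binom{X}{t}$ denotes the set of $t$-subsets of $X$. A $t$-$(v,k,\lambda)$ design is a pair $(X,\mathcal{B})$ with $|X|=v$ and $\mathcal{B}\subseteq\binom{X}{k}$ (the blocks) such that every $T\in\binom{X}{t}$ is contained in exactly $\lambda$ blocks; it is moreover required that $t\ge 2$, $t<k$, $\mathcal{B}\neq\emptyset$ and $\mathcal{B}\neq\binom{X}{k}$. An automorphism of $(X,\mathcal{B})$ is a bijection $\sigma:X\to X$ with $\sigma(\mathcal{B})=\mathcal{B}$. Let $V$ be a set with $|V|=n$; the symmetric group $\mathrm{Sym}(V)$ acts on $\binom{V}{2}$ (the edge set of the complete graph $K_n$), giving a permutation group $\mathcal{S}_n^{[2]}\le \mathrm{Sym}(\binom{V}{2})$. A $t$-$(v,k,\lambda)$ design $(X,\mathcal{B})$ is graphical if $v=\binom{n}{2}$ and its automorphism group contains a subgroup that is permutation isomorphic to $\mathcal{S}_n^{[2]}$ (equivalently, one may take $X$ to be the edge set of $K_n$ and $\mathcal{B}$ a set of $k$-edge subgraphs of $K_n$ closed under graph isomorphism, i.e. a union of $\mathcal{S}_n^{[2]}$-orbits on $\binom{X}{k}$). *)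

From mathcomp Require Import all_boot all_fingroup.
Unset Printing Implicit Defensive.

Definition edges (n : nat) : {set {set 'I_n}} := [set e : {set 'I_n} | #|e| == 2].

(* t-(v,k,lambda) design on point set X = edges n (v = 'C(n,2)),
   blocks B : set of k-subsets of X. *)
Definition is_design (n t k lam : nat) (B : {set {set {set 'I_n}}}) : Prop :=
  2 <= t /\ t < k /\
  B != set0 /\
  B != [set b : {set {set 'I_n}} | (b \subset edges n) && (#|b| == k)] /\
  (forall b, b \in B -> b \subset edges n /\ #|b| = k) /\
  (forall T : {set {set 'I_n}}, T \subset edges n -> #|T| = t ->
      #|[set b in B | T \subset b]| = lam).

Definition edge_act n (s : {perm 'I_n}) (e : {set 'I_n}) : {set 'I_n} := s @: e.
Definition block_act n (s : {perm 'I_n}) (b : {set {set 'I_n}}) : {set {set 'I_n}} :=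
  edge_act n s @: b.

Definition graphical_design (n t k lam : nat) (B : {set {set {set 'I_n}}}) : Prop :=
  is_design n t k lam B /\
  (forall s : {perm 'I_n}, block_act n s @: B = B).

From mathcomp Require Import all_boot all_fingroup.
From mathcomp Require Import zify ring.

Set Implicit Arguments.
Unset Strict Implicit.

(* Count, inside each block, the ordered pairs of distinct intersecting edges.
   An edge of K_n meets 2(n-2) of the other C(n,2) - 1 edges, so in a 2-design
   with 5-edge blocks this count averages 80/(n+1) < 1 over the blocks, and some
   block is a matching of five disjoint edges.  The 5-edge graphs that are not
   blocks form a 2-design as well, so they contain a 5-matching too; as Sym(n)
   is transitive on 5-matchings, the block set cannot be a union of orbits. *)

Lemma exists_zero_lt_card (I : finType) (A : {set I}) (w : I -> nat) :
  \sum_(i in A) w i < #|A| -> exists2 i, i \in A & w i = 0.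
Proof.
move=> ltwA; case: (boolP [exists i in A, w i == 0]) => [/exists_inP[i iA /eqP]|].
  by exists i.
rewrite negb_exists_in => /forall_inP w_pos; move: ltwA; rewrite ltnNge -sum1_card.
by rewrite leq_sum // => i /w_pos; rewrite lt0n.
Qed.

Lemma sum_nat_pred_card (I : finType) (A : {set I}) (P : pred I) :
  \sum_(i in A) (P i : nat) = #|[set i in A | P i]|.
Proof. by rewrite -sum1dep_card big_mkcondr; apply: eq_bigr => i _; case: (P i). Qed.

Section PairBalancedFamilies.

Variable T : finType.
Implicit Types (X S b : {set T}) (F G : {set {set T}}) (r : rel T).

Definition ksubsets X k := [set b : {set T} | (b \subset X) && (#|b| == k)].

Definition pair_balanced X F mu :=
  forall e f, e \in X -> f \in X -> e != f ->
  #|[set b in F | (e \in b) && (f \in b)]| = mu.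

Definition rel_pairs r b := \sum_(e in b) \sum_(f in b) ((e != f) && r e f : nat).

Lemma sum_nat_subset (A E : {set T}) (h : T -> nat) : A \subset E ->
  \sum_(x in A) h x = \sum_(x in E) (x \in A) * h x.
Proof.
move=> sAE; rewrite [RHS](big_setID A) /= (setIidPr sAE).
rewrite [X in _ + X]big1 ?addn0 => [|x].
  by apply: eq_bigr => x xA; rewrite xA mul1n.
by rewrite inE => /andP[/negbTE-> _].
Qed.

Lemma sum_rel_pairs_balanced X F mu r :
  {in F, forall b, b \subset X} -> pair_balanced X F mu ->
  \sum_(b in F) rel_pairs r b = mu * rel_pairs r X.
Proof.
move=> FX balF.
transitivity (\sum_(b in F) \sum_(e in X) \sum_(f in X)
                ((e \in b) && (f \in b)) * ((e != f) && r e f)).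
  apply: eq_bigr => b bF; rewrite /rel_pairs (sum_nat_subset _ (FX b bF)).
  apply: eq_bigr => e _; rewrite (sum_nat_subset _ (FX b bF)) big_distrr /=.
  by apply: eq_bigr => f _; rewrite mulnA mulnb.
rewrite exchange_big big_distrr; apply: eq_bigr => e eX.
rewrite exchange_big big_distrr; apply: eq_bigr => f fX.
rewrite -big_distrl /=; case: eqP => [_|/eqP ef]; first by rewrite !muln0.
rewrite -(balF e f eX fX ef) -sum1_card big_mkcond [in RHS]big_mkcond /=.
by congr (_ * _); apply: eq_bigr => b _; rewrite inE; case: (b \in F).
Qed.

Lemma rel_pairs_regular X r a :
  {in X, forall e, \sum_(f in X) ((e != f) && r e f : nat) = a} ->
  rel_pairs r X = #|X| * a.
Proof. by move=> regX; rewrite /rel_pairs -sum_nat_const; apply: eq_bigr. Qed.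

Lemma sum_neq X e : e \in X -> \sum_(f in X) (e != f : nat) = #|X|.-1.
Proof.
move=> eX; rewrite (bigD1 e) //= eqxx add0n (eq_bigr (fun _ => 1)) => [|f /andP[_ fe]].
  by rewrite sum1dep_card (cardsD1 e X) eX /=; apply: eq_card => f; rewrite !inE andbC.
by rewrite eq_sym fe.
Qed.

Lemma rel_pairs_true X : rel_pairs (fun _ _ => true) X = #|X| * #|X|.-1.
Proof.
by apply: rel_pairs_regular => e eX; rewrite -(sum_neq eX); apply: eq_bigr => f; rewrite andbT.
Qed.

Lemma card_ksubsets_supset X S k : S \subset X -> #|S| <= k ->
  #|[set b in ksubsets X k | S \subset b]| = 'C(#|X| - #|S|, k - #|S|).
Proof.
move=> SX leSk.
have cXS : #|X :\: S| = #|X| - #|S| by rewrite cardsD (setIidPr SX).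
rewrite -cXS -cards_draws.
set D := [set c : {set T} | c \subset X :\: S & #|c| == k - #|S|].
have unionK (c : {set T}) : c \subset X :\: S -> (c :|: S) :\: S = c.
  move=> cXS'; apply/setP => x; rewrite !inE; case xc: (x \in c) => /=.
    by have := subsetP cXS' x xc; rewrite !inE => /andP[-> _].
  by case: (x \in S).
have -> : [set b in ksubsets X k | S \subset b] = [set c :|: S | c in D].
  apply/setP => b; rewrite !inE; apply/idP/imsetP.
    move=> /andP[/andP[bX /eqP cb] Sb]; exists (b :\: S); last first.
      apply/setP => x; rewrite !inE.
      by case xS: (x \in S); rewrite ?orbT ?orbF //= (subsetP Sb).
    by rewrite inE setSD //= cardsD (setIidPr Sb) cb.
  move=> [c]; rewrite inE => /andP[cXS' /eqP cc] ->.
  rewrite subsetUr andbT subUset SX (subset_trans cXS') ?subsetDl //=.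
  rewrite cardsU cc (_ : c :&: S = set0) ?cards0 ?subn0 ?subnK //.
  apply/setP => x; rewrite !inE; apply/negP => /andP[/(subsetP cXS')].
  by rewrite !inE => /andP[/negP].
apply: card_in_imset => c1 c2; rewrite !inE => /andP[s1 _] /andP[s2 _] eqU.
by rewrite -(unionK c1 s1) eqU unionK.
Qed.

Lemma pair_balanced_subsets X F mu :
  (forall S, S \subset X -> #|S| = 2 -> #|[set b in F | S \subset b]| = mu) ->
  pair_balanced X F mu.
Proof.
move=> balS e f eX fX ef; rewrite -(balS [set e; f]).
- by apply: eq_card => b; rewrite !inE subUset !sub1set.
- by rewrite subUset !sub1set eX fX.
- by rewrite cards2 ef.
Qed.

Lemma pair_balanced_ksubsets X k : 2 <= k ->
  pair_balanced X (ksubsets X k) 'C(#|X| - 2, k - 2).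
Proof.
by move=> le2k; apply: pair_balanced_subsets => S SX cS; rewrite card_ksubsets_supset ?cS.
Qed.

Lemma pair_balancedD X F G mu lam : F \subset G ->
  pair_balanced X G mu -> pair_balanced X F lam ->
  pair_balanced X (G :\: F) (mu - lam).
Proof.
move=> FG balG balF e f eX fX ef.
rewrite -(balG e f eX fX ef) -(balF e f eX fX ef) -cardsDS.
  apply: eq_card => b; rewrite !inE.
  by case: (b \in F); case: (b \in G); case: (e \in b); case: (f \in b).
by apply/subsetP => b; rewrite !inE => /andP[/(subsetP FG) ->].
Qed.

Lemma rel_pairs_eq0 r b : rel_pairs r b = 0 -> {in b &, forall e f, e != f -> ~~ r e f}.
Proof.
move=> /eqP; rewrite sum_nat_eq0 => /forall_inP rb0 e f eb fb ef.
move: (rb0 e eb); rewrite sum_nat_eq0 => /forall_inP /(_ f fb).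
by rewrite ef eqb0.
Qed.

Lemma rel_pairs_balanced_uniform X F k mu r a :
  {in F, forall b, b \subset X /\ #|b| = k} -> pair_balanced X F mu ->
  {in X, forall e, \sum_(f in X) ((e != f) && r e f : nat) = a} ->
  #|X|.-1 * \sum_(b in F) rel_pairs r b = a * (k * k.-1) * #|F|.
Proof.
move=> unifF balF regX; have FX b : b \in F -> b \subset X by move=> /unifF[].
(* Double counting once for [r] and once for all pairs eliminates [mu]. *)
have allF : \sum_(b in F) rel_pairs (fun _ _ => true) b = #|F| * (k * k.-1).
  by rewrite -sum_nat_const; apply: eq_bigr => b /unifF[_ <-]; apply: rel_pairs_true.
rewrite (sum_rel_pairs_balanced r FX balF) (rel_pairs_regular regX).
move: allF; rewrite (sum_rel_pairs_balanced _ FX balF) rel_pairs_true => allF.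
transitivity (a * (mu * (#|X| * #|X|.-1))); first by ring.
by rewrite allF; ring.
Qed.

Lemma exists_rel_pairs_eq0 X F k mu r a : F != set0 ->
  {in F, forall b, b \subset X /\ #|b| = k} -> pair_balanced X F mu ->
  {in X, forall e, \sum_(f in X) ((e != f) && r e f : nat) = a} ->
  a * (k * k.-1) < #|X|.-1 ->
  exists2 b, b \in F & rel_pairs r b = 0.
Proof.
move=> F0 unifF balF regX lt_a; apply: exists_zero_lt_card.
have := rel_pairs_balanced_uniform unifF balF regX; rewrite -card_gt0 in F0.
move: (\sum_(b in F) _) => S; nia.
Qed.

End PairBalancedFamilies.

Lemma bin2_double m : 'C(m, 2) * 2 = m * m.-1.
Proof. by rewrite bin_ffact ffactnS ffactn1. Qed.

Section EdgesOfCompleteGraph.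

Variable n : nat.

Definition meets : rel {set 'I_n} := fun e f => ~~ [disjoint e & f].

Lemma edge_card (e : {set 'I_n}) : e \in edges n -> #|e| = 2.
Proof. by rewrite inE => /eqP. Qed.

Lemma card_edges : #|edges n| = 'C(n, 2).
Proof. by rewrite /edges card_draws card_ord. Qed.

Lemma sum_disjoint_edges (e : {set 'I_n}) : e \in edges n ->
  \sum_(f in edges n) ([disjoint e & f] : nat) = 'C(n - 2, 2).
Proof.
move=> eE; rewrite sum_nat_pred_card.
have -> : [set f in edges n | [disjoint e & f]] =
          [set f : {set 'I_n} | f \subset ~: e & #|f| == 2].
  by apply/setP => f; rewrite !inE disjoint_sym disjoints_subset andbC.
rewrite cards_draws; congr 'C(_, _).
by have := cardsC e; rewrite card_ord (edge_card eE); lia.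
Qed.

Lemma sum_meets_edges (e : {set 'I_n}) : e \in edges n ->
  \sum_(f in edges n) ((e != f) && meets e f : nat) = (n - 2).*2.
Proof.
move=> eE; have ce := edge_card eE.
have neq_split f : (e != f : nat) = ((e != f) && meets e f) + [disjoint e & f].
  rewrite /meets; case: (boolP [disjoint e & f]) => [dis|_]; last by rewrite andbT addn0.
  rewrite andbF add0n; suff -> : e != f by [].
  by apply: contraTneq dis => <-; rewrite -setI_eq0 setIid -cards_eq0 ce.
have := sum_neq eE; rewrite (eq_bigr _ (fun f _ => neq_split f)) big_split /=.
rewrite sum_disjoint_edges // card_edges.
have n2 : 2 <= n by rewrite -ce -[X in _ <= X]card_ord max_card.
move: (\sum_(f in edges n) _) => S.
have := bin2_double n; have := bin2_double (n - 2); nia.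
Qed.

Lemma exists_matching_block k (F : {set {set {set 'I_n}}}) mu :
  2 <= k -> 4 * (k * k.-1) < n.+1 -> F != set0 ->
  F \subset ksubsets (edges n) k -> pair_balanced (edges n) F mu ->
  exists2 b, b \in F & trivIset b.
Proof.
move=> le2k lt_kn F0 FA balF.
have unifF : {in F, forall b : {set {set 'I_n}}, b \subset edges n /\ #|b| = k}.
  by move=> b /(subsetP FA); rewrite inE => /andP[-> /eqP].
have [|b bF /rel_pairs_eq0 disjF] := exists_rel_pairs_eq0 F0 unifF balF sum_meets_edges.
  have k2 : 2 <= k * k.-1 by rewrite (@leq_mul 2 1) //; lia.
  rewrite card_edges; have := bin2_double n; move: (k * k.-1) k2 lt_kn => m; nia.
by exists b => //; apply/trivIsetP => e f eb fb /(disjF e f eb fb); rewrite negbK.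
Qed.

End EdgesOfCompleteGraph.

Lemma imset_set_seq (U W : finType) (h : U -> W) (s : seq U) :
  h @: [set:: s] = [set:: map h s].
Proof.
apply/setP => y; rewrite inE; apply/imsetP/mapP => [] [x];
  by rewrite ?inE => xs ->; exists x; rewrite ?inE.
Qed.

Section PartitionsAreConjugate.

Variable V : finType.
Implicit Types (s : seq V) (P : {set {set V}}).

Lemma exists_perm_map s1 s2 :
  uniq s1 -> uniq s2 -> size s1 = size s2 -> exists p : {perm V}, map p s1 = s2.
Proof.
elim: s1 s2 => [|x s1 IH] [|y s2] //=; first by exists 1%g.
move=> /andP[xs1 u1] /andP[ys2 u2] [hs].
have [p hp] := IH s2 u1 u2 hs.
exists (p * tperm (p x) y)%g.
rewrite permM tpermL; congr (_ :: _).
rewrite -hp; apply/eq_in_map => z zs.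
rewrite permM tpermD //.
  by rewrite (inj_eq perm_inj); apply: contraNneq xs1 => ->.
by apply: contraNneq ys2 => ->; rewrite -hp map_f.
Qed.

Definition cells P : seq (seq V) := [seq enum (A : {set V}) | A <- enum P].

Lemma cellsK P : [set:: map (fun s => [set:: s]) (cells P)] = P.
Proof.
rewrite -map_comp (eq_map (fun A => set_enum A)) map_id; exact: set_enum.
Qed.

Lemma shape_cells P m :
  {in P, forall A : {set V}, #|A| = m} -> shape (cells P) = nseq #|P| m.
Proof.
move=> unifP; have -> : #|P| = size (shape (cells P)) by rewrite !size_map cardE.
apply/all_pred1P/allP.
by move=> _ /mapP[_ /mapP[A + ->] ->]; rewrite mem_enum /= -cardE => /unifP ->.
Qed.

Lemma uniq_flatten_cells P : trivIset P -> uniq (flatten (cells P)).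
Proof.
move=> /eqP tP; apply/card_uniqP; rewrite -cardsE.
have -> : [set x in flatten (cells P)] = cover P.
  apply/setP => x; rewrite inE; apply/flatten_mapP/bigcupP => [] [A];
    by rewrite ?mem_enum => AP xA; exists A; rewrite ?mem_enum.
rewrite -tP size_flatten /shape -map_comp sumnE big_map big_enum.
by apply: eq_bigr => A _; rewrite /= -cardE.
Qed.

Lemma trivIset_uniform_conjugate P1 P2 m :
  trivIset P1 -> trivIset P2 -> {in P1, forall A : {set V}, #|A| = m} ->
  {in P2, forall A : {set V}, #|A| = m} -> #|P1| = #|P2| ->
  exists p : {perm V}, [set p @: A | A : {set V} in P1] = P2.
Proof.
move=> tP1 tP2 unif1 unif2 c12.
have sh1 := shape_cells unif1; have sh2 := shape_cells unif2.
have [|p hp] := exists_perm_map (uniq_flatten_cells tP1) (uniq_flatten_cells tP2).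
  by rewrite !size_flatten sh1 sh2 c12.
exists p.
have cells_map : map (map p) (cells P1) = cells P2.
  apply: eq_from_flatten_shape; first by rewrite -map_flatten.
  by rewrite /shape -map_comp (eq_map (@size_map _ _ p)) -!/(shape _) sh1 sh2 c12.
have imset_cells (ss : seq (seq V)) :
    [seq p @: (A : {set V}) | A <- [seq [set:: s] | s <- ss]] =
    [seq [set:: s] | s <- map (map p) ss].
  by rewrite -!map_comp; apply: eq_map => s; apply: imset_set_seq.
by rewrite -[in RHS](cellsK P2) -cells_map -[in LHS](cellsK P1) imset_set_seq imset_cells.
Qed.

End PartitionsAreConjugate.

Theorem mainTheorem1 (n lam : nat) (hn : 538 <= n) (hlam : 0 < lam) :
  ~ exists B : {set {set {set 'I_n}}}, graphical_design n 2 5 lam B.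
Proof.
move=> [B [[_ [_ [B0 [B_proper [unifB balB]]]]] invB]].
set A := ksubsets (edges n) 5.
have BA : B \subset A by apply/subsetP => b /unifB[bX cb]; rewrite inE bX cb eqxx.
have C0 : A :\: B != set0.
  by rewrite setD_eq0; apply: contra B_proper => AB; rewrite eqEsubset BA.
have {}balB : pair_balanced (edges n) B lam by apply: pair_balanced_subsets.
have balC := pair_balancedD BA (pair_balanced_ksubsets (isT : 2 <= 5)) balB.
have lt_n : 4 * (5 * 5.-1) < n.+1 by lia.
have [b1 b1B tb1] := exists_matching_block (isT : 2 <= 5) lt_n B0 BA balB.
have [b2 b2C tb2] := exists_matching_block (isT : 2 <= 5) lt_n C0 (subsetDl A B) balC.
have b2A : b2 \in A by move: b2C; rewrite inE => /andP[].
have unif_edges b : b \in A -> {in b, forall e : {set 'I_n}, #|e| = 2}.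
  by rewrite inE => /andP[/subsetP bX _] e /bX /edge_card.
have [p pb12] : exists p : {perm 'I_n}, block_act n p b1 = b2.
  apply: trivIset_uniform_conjugate tb1 tb2 _ (unif_edges b2 b2A) _.
    exact: unif_edges (subsetP BA b1 b1B).
  by have [_ ->] := unifB b1 b1B; move: b2A; rewrite inE => /andP[_ /eqP->].
have : block_act n p b1 \in B by rewrite -(invB p) imset_f.
by rewrite pb12 => b2B; move: b2C; rewrite inE b2B.
Qed.
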